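(* Let $a<b$ with $[a,b]\subset[0,\infty)$, let $f,g:[a,b]\to\mathbb{R}$ be integrable with $0\le g(t)\le1$ for all $t\in[a,b]$ and such that $\int_a^b g(t)f'(t)\,dt$ exists. Suppose $f$ is absolutely continuous on $[a,b]$ and $|f'|$ is $s$-convex on $[a,b]$ for some fixed $s\in(0,1]$. Let $\lambda:=\int_a^b g(t)\,dt$. Then $$\left|\int_a^{a+\lambda} f(t)\,dt-\int_a^b f(t)g(t)\,dt\right|\le\frac{1}{(s+1)(s+2)}\left[\lambda^2|f'(a)|+(b-a-\lambda)^2|f'(b)|\right]+\frac{1}{s+2}\left[\lambda^2+(b-a-\lambda)^2\right]|f'(a+\lambda)|,$$ and $$\left|\int_a^b f(t)g(t)\,dt-\int_{b-\lambda}^b f(t)\,dt\right|\le\frac{1}{(s+1)(s+2)}\left[\lambda^2|f'(b)|+(b-a-\lambda)^2|f'(a)|\right]+\frac{1}{s+2}\left[\lambda^2+(b-a-\lambda)^2\right]|f'(b-\lambda)|.$$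
   Context: For fixed $s\in(0,1]$, a function $h:I\to\mathbb{R}$ on an interval $I\subset[0,\infty)$ is $s$-convex (in the second sense) if $h(\alpha x+\beta y)\le\alpha^s h(x)+\beta^s h(y)$ for all $x,y\in I$ and all $\alpha,\beta\ge0$ with $\alpha+\beta=1$. *)

From HB Require Import structures.
From mathcomp Require Import all_boot all_order all_algebra.
From mathcomp Require Import all_classical all_reals all_analysis.
Set Implicit Arguments. Unset Strict Implicit. Unset Printing Implicit Defensive.
Import Order.TTheory GRing.Theory Num.Theory numFieldNormedType.Exports.
Local Open Scope classical_set_scope.
Local Open Scope ring_scope.

Definition s_convex_on (R : realType) (s : R) (I : set R) (h : R -> R) : Prop :=
  forall x y (al be : R), I x -> I y -> 0 <= al -> 0 <= be -> al + be = 1 ->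
    h (al * x + be * y) <= powR al s * h x + powR be s * h y.

Definition abs_continuous_on (R : realType) (a b : R) (f : R -> R) : Prop :=
  forall e : R, 0 < e -> exists2 d : R, 0 < d &
    forall (n : nat) (x y : 'I_n -> R),
      (forall i, a <= x i /\ x i <= y i /\ y i <= b) ->
      (forall i j, i != j -> y i <= x j \/ y j <= x i) ->
      \sum_(i < n) (y i - x i) < d ->
      \sum_(i < n) `|f (y i) - f (x i)| < e.

From HB Require Import structures.
From mathcomp Require Import all_boot all_order all_algebra.
From mathcomp Require Import all_classical all_reals all_analysis.
From mathcomp Require Import ring lra.
Set Implicit Arguments.
Unset Strict Implicit.
Unset Printing Implicit Defensive.
Import Order.TTheory GRing.Theory Num.Theory numFieldNormedType.Exports.
Local Open Scope classical_set_scope.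
Local Open Scope ring_scope.

(* Put c := a + lam (resp. c := b - lam).  As c - a = \int_a^b g (resp. b - c = \int_a^b g),
   the quantity to bound is \int_a^c (f - f c) (1 - g) - \int_c^b (f - f c) g (resp. the same
   with g and 1 - g exchanged), and 0 <= g <= 1, so it suffices to integrate bounds for
   |f t - f c| over [a, c] and over [c, b].  On a segment [lo, hi], s-convexity bounds |f'| by
   |f'(hi)| ((t - lo)/(hi - lo))^s + |f'(lo)| ((hi - t)/(hi - lo))^s, whose explicit primitive P
   is nondecreasing, and |f y - f x| <= P y - P x for lo <= x <= y <= hi; integrating P hi - P
   and P - P lo gives the constants 1/((s+1)(s+2)) and 1/(s+2).
   The comparison |f y - f x| <= P y - P x stands in for the fundamental theorem of calculus
   for absolutely continuous functions.  It is proved by real induction: the null set where f'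
   is missing or exceeds P' is covered by an open set of small measure, on whose intervals
   absolute continuity keeps the increments of f small, and elsewhere the derivatives of f and
   P are compared locally. *)

Ltac solve_neq0 := repeat (apply/andP; split); apply/negP => /eqP; lra.

Section increments.
Variable R : realType.
Local Notation mu := (@lebesgue_measure R).

Lemma real_induction (x y : R) (Q : R -> Prop) : x <= y -> Q x ->
  (forall t, x <= t <= y -> exists2 d, 0 < d & forall z z',
     x <= z <= t -> t <= z' <= y -> z' - z < d -> Q z -> Q z') ->
  Q y.
Proof.
move=> xy Qx step.
pose S := [set z | x <= z <= y /\ Q z].
have Sx : S x by split; rewrite ?lexx ?xy.
have supS : has_sup S by split; [exists x | exists y => z [/andP[]]].
set t := sup S.
have xt : x <= t := sup_upper_bound supS Sx.
have ty : t <= y by apply: ge_sup; [exists x | move=> z [/andP[]]].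
have [d d0 Hd] : exists2 d, 0 < d & forall z z',
    x <= z <= t -> t <= z' <= y -> z' - z < d -> Q z -> Q z'.
  by apply: step; rewrite xt ty.
have d2 : 0 < d / 2 by lra.
have [z [/andP[xz zy] Qz] tz] := sup_adherent d2 supS.
have zt : z <= t by apply: sup_upper_bound => //; rewrite /S /= xz zy.
pose z' := Num.min (t + d / 2) y.
have z'_le : z' <= t + d / 2 by rewrite ge_min lexx.
have Qz' : Q z'.
  apply: (Hd z) => //; first by rewrite xz.
    by rewrite le_min ge_min lexx orbT ty andbT /=; lra.
  by rewrite -/t in tz; lra.
have xz' : x <= z' by rewrite le_min xy andbT; lra.
have z'y : z' <= y by rewrite ge_min lexx orbT.
have z't : z' <= t by apply: sup_upper_bound => //; rewrite /S /= xz' z'y.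
have yt : y <= t by move: z't; rewrite ge_min => /orP[]; lra.
suff <- : z' = y by [].
apply/le_anti; rewrite z'y /= le_min lexx andbT; lra.
Qed.

Lemma is_derive_remainder_le (F : R -> R) (t dF : R) : is_derive t 1 F dF ->
  forall e, 0 < e -> exists2 d, 0 < d & forall w, `|w - t| < d ->
    `|F w - F t - dF * (w - t)| <= e * `|w - t|.
Proof.
move=> [dervF <-] e e0.
move/cvgr_dist_le : dervF => /(_ e e0).
rewrite near_withinE => /nbhs_ballP[d /= d0 Hd].
exists d => // w wt.
have [->|wt0] := eqVneq w t; first by rewrite !subrr mulr0 normr0 subr0 mulr0 normr0.
rewrite -subr_eq0 in wt0.
have := Hd (w - t); rewrite /ball /= sub0r normrN => /(_ wt wt0).
rewrite -[(w - t)%:A]/((w - t) * 1) mulr1 subrK /GRing.scale /=.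
have -> : F w - F t - 'D_1 F t * (w - t)
    = - ((w - t) * ('D_1 F t - (w - t)^-1 * (F w - F t))) by field.
by rewrite normrN normrM mulrC [e * _]mulrC => /ler_wpM2l; apply.
Qed.

Lemma is_derive_straddle (F : R -> R) (t dF : R) : is_derive t 1 F dF ->
  forall e, 0 < e -> exists2 d, 0 < d & forall u v, u <= t <= v -> v - u < d ->
    `|F v - F u - dF * (v - u)| <= e * (v - u).
Proof.
move=> dervF e e0; have [d d0 Hd] := is_derive_remainder_le dervF e0.
exists d => // u v /andP[ut tv] vu.
have hv : `|F v - F t - dF * (v - t)| <= e * (v - t).
  by have := Hd v; rewrite ger0_norm ?subr_ge0 //; apply; lra.
have hu : `|F u - F t - dF * (u - t)| <= e * (t - u).
  by have := Hd u; rewrite ler0_norm ?subr_le0 // opprB; apply; lra.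
have -> : F v - F u - dF * (v - u)
    = (F v - F t - dF * (v - t)) - (F u - F t - dF * (u - t)) by ring.
apply: le_trans (ler_normB _ _) _.
have -> : e * (v - u) = e * (v - t) + e * (t - u) by ring.
exact: lerD.
Qed.

Lemma is_derive_increment_le (F P : R -> R) (t dF p eta : R) :
  is_derive t 1 F dF -> is_derive t 1 P p -> `|dF| <= p -> 0 < eta ->
  exists2 d, 0 < d & forall u v, u <= t <= v -> v - u < d ->
    `|F v - F u| <= P v - P u + eta * (v - u).
Proof.
move=> dervF dervP dFp eta0; have eta2 : 0 < eta / 2 by lra.
have [d1 d10 H1] := is_derive_straddle dervF eta2.
have [d2 d20 H2] := is_derive_straddle dervP eta2.
exists (Num.min d1 d2) => [|u v utv]; first by rewrite lt_min d10 d20.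
rewrite lt_min => /andP[vu1 vu2].
have uv : 0 <= v - u by move: utv => /andP[]; lra.
have := H1 _ _ utv vu1; have /ler_normlP[+ _] := H2 _ _ utv vu2.
have : `|dF * (v - u)| <= p * (v - u) by rewrite normrM (ger0_norm uv) ler_wpM2r.
have := ler_normD (F v - F u - dF * (v - u)) (dF * (v - u)); rewrite subrK.
lra.
Qed.

Definition nonoverlapping (p q : R * R) := (p.2 <= q.1) || (q.2 <= p.1).

Lemma lebesgue_measure_big_itv_oc (s : seq (R * R)) :
  (forall p, p \in s -> p.1 <= p.2) -> pairwise nonoverlapping s ->
  mu (\big[setU/set0]_(p <- s) `]p.1, p.2]%classic) = (\sum_(p <- s) (p.2 - p.1))%:E.
Proof.
elim: s => [|q s IH] les; first by rewrite !big_nil measure0.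
rewrite pairwise_cons => /andP[/allP q_s s_nov].
have mU : measurable (\big[setU/set0]_(p <- s) `]p.1, p.2]%classic).
  by apply: bigsetU_measurable => p _; exact: measurable_itv.
rewrite !big_cons measureU //; last first.
  apply/seteqP; split => // w [/= qw]; rewrite -bigcup_seq => -[p /= ps].
  move: qw; have := q_s p ps; rewrite /nonoverlapping /= !in_itv /=.
  by case/orP => ? /andP[? ?] /andP[? ?]; clear IH; lra.
rewrite EFinD; congr (_ + _); last first.
  by apply: IH => // p ps; apply: les; rewrite in_cons ps orbT.
rewrite [LHS](lebesgue_measure_itv `]q.1, q.2]) /= lte_fin -EFinD.
have := les q (mem_head _ _); rewrite le_eqVlt => /orP[/eqP ->|-> //].
by rewrite ltxx subrr.
Qed.

Lemma abs_continuous_on_seq (x y : R) (F : R -> R) : abs_continuous_on x y F ->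
  forall e, 0 < e -> exists2 d, 0 < d & forall s : seq (R * R),
    (forall p, p \in s -> x <= p.1 <= p.2 /\ p.2 <= y) -> pairwise nonoverlapping s ->
    \sum_(p <- s) (p.2 - p.1) < d -> \sum_(p <- s) `|F p.2 - F p.1| < e.
Proof.
move=> acF e e0; have [d d0 Hd] := acF e e0.
exists d => // s s_in s_nov s_len.
pose u (i : 'I_(size s)) := (nth (0, 0) s i).1.
pose v (i : 'I_(size s)) := (nth (0, 0) s i).2.
have big_nthE (G : R -> R -> R) :
    \sum_(p <- s) G p.1 p.2 = \sum_(i < size s) G (u i) (v i).
  by rewrite (big_nth (0, 0)) big_mkord.
rewrite (big_nthE (fun a b => `|F b - F a|)); apply: Hd.
- move=> i; have [/andP[? ?] ?] := s_in _ (mem_nth (0, 0) (ltn_ord i)).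
  by rewrite /u /v; split; lra.
- move=> i j; have nov := pairwiseP (0, 0) s_nov.
  rewrite neq_ltn => /orP[] ij; have := nov _ _ (ltn_ord _) (ltn_ord _) ij.
    by case/orP; [left|right].
  by case/orP; [right|left].
- by rewrite -(big_nthE (fun a b => b - a)).
Qed.

Lemma abs_continuous_onS (a b x y : R) (F : R -> R) : a <= x -> y <= b ->
  abs_continuous_on a b F -> abs_continuous_on x y F.
Proof.
move=> ax yb acF e e0; have [d d0 Hd] := acF e e0.
by exists d => // n u v uv; apply: Hd => i; have := uv i; lra.
Qed.

Lemma lebesgue_negligible_open_cover (Z : set R) (d : R) : 0 < d ->
  mu.-negligible Z -> exists U, [/\ open U, Z `<=` U & (mu U < d%:E)%E].
Proof.
move=> d0 [N [mN N0 ZN]].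
have Nfin : (mu N < +oo)%E by rewrite N0 ltry.
have [U [oU NU UN]] := lebesgue_regularity_outer mN Nfin d0.
exists U; split => //; first exact: subset_trans NU.
have mU : measurable U by exact: measurable_realfun.open_measurable.
apply: le_lt_trans UN; rewrite -[leRHS]adde0 -N0.
apply: le_trans (measureU2 _ _ _) => //; last exact: measurableD.
apply: le_measure; rewrite ?inE //; first by apply: measurableU => //; exact: measurableD.
by move=> w Uw; have [Nw|nNw] := pselect (N w); [right|left].
Qed.

Lemma increment_le_up_to_cover (x y eta : R) (F P : R -> R) (U : set R) :
  x <= y -> 0 < eta -> open U ->
  (forall u v, x <= u -> u <= v -> v <= y -> P u <= P v) ->
  (forall t, x <= t <= y -> U t \/ exists2 d, 0 < d & forall u v, u <= t <= v ->
     v - u < d -> `|F v - F u| <= P v - P u + eta * (v - u)) ->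
  exists s : seq (R * R), [/\
    forall q, q \in s -> [/\ x <= q.1 <= q.2, q.2 <= y & [set w | q.1 <= w <= q.2] `<=` U],
    pairwise nonoverlapping s &
    `|F y - F x| <= P y - P x + eta * (y - x) + \sum_(q <- s) `|F q.2 - F q.1|].
Proof.
move=> xy eta0 oU Pmon local.
pose Inv z := exists s : seq (R * R), [/\
  forall q, q \in s -> [/\ x <= q.1 <= q.2, q.2 <= z & [set w | q.1 <= w <= q.2] `<=` U],
  pairwise nonoverlapping s &
  `|F z - F x| <= P z - P x + eta * (z - x) + \sum_(q <- s) `|F q.2 - F q.1|].
have Inv_step z z' : x <= z -> z <= z' -> z' <= y -> Inv z ->
    [set w | z <= w <= z'] `<=` U \/ `|F z' - F z| <= P z' - P z + eta * (z' - z) ->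
    Inv z'.
  move=> xz zz' z'y [s [s_in s_nov Hz]] [zz'U|incr].
  - exists ((z, z') :: s); split.
    + move=> q; rewrite in_cons => /orP[/eqP -> /=|qs]; first by rewrite xz zz'.
      by have [? ? ?] := s_in q qs; split => //; lra.
    + rewrite pairwise_cons s_nov andbT; apply/allP => q qs.
      by have [_ qz _] := s_in q qs; rewrite /nonoverlapping qz orbT.
    + have := Pmon _ _ xz zz' z'y; have := ler_distD (F z) (F z') (F x).
      rewrite big_cons /=.
      have : eta * (z - x) <= eta * (z' - x) by rewrite ler_pM2l //; lra.
      lra.
  - exists s; split => //; first by move=> q /s_in [? ? ?]; split => //; lra.
    have := ler_distD (F z) (F z') (F x); lra.
apply: (real_induction (Q := Inv) xy).
  by exists [::]; split => //; rewrite big_nil !subrr normr0 mulr0 !addr0.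
move=> t xty; have [Ut|[r r0 incr]] := local t xty; move: xty => /andP[xt ty].
  move: oU; rewrite openE => /(_ t Ut) /nbhs_ballP[r /= r0 ballU].
  exists r => // z z' /andP[xz zt] /andP[tz' z'y] zz'r Iz.
  apply: Inv_step Iz (or_introl _) => //; first by lra.
  move=> w /andP[zw wz']; apply: ballU; rewrite /ball /= ltr_norml; lra.
exists r => // z z' /andP[xz zt] /andP[tz' z'y] zz'r Iz.
by apply: Inv_step Iz (or_intror _) => //; [lra | apply: incr; rewrite ?zt].
Qed.

Lemma abs_continuous_increment_le (x y : R) (F dF P p : R -> R) :
  x <= y -> abs_continuous_on x y F ->
  (forall u v, x <= u -> u <= v -> v <= y -> P u <= P v) ->
  (forall t, x < t < y -> is_derive t 1 P (p t)) ->
  {ae mu, forall t, x < t < y -> is_derive t 1 F (dF t) /\ `|dF t| <= p t} ->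
  `|F y - F x| <= P y - P x.
Proof.
move=> xy acF Pmon dervP aeF; apply/ler_addgt0Pr => eps eps0.
pose eta := eps / 2 / (y - x + 1).
have eta0 : 0 < eta by apply: divr_gt0; lra.
have eta_small : eta * (y - x) <= eps / 2.
  by rewrite /eta mulrAC ler_pdivrMr; [rewrite ler_wpM2l|]; lra.
have [d d0 acd] : exists2 d, 0 < d & forall s : seq (R * R),
    (forall q, q \in s -> x <= q.1 <= q.2 /\ q.2 <= y) -> pairwise nonoverlapping s ->
    \sum_(q <- s) (q.2 - q.1) < d -> \sum_(q <- s) `|F q.2 - F q.1| < eps / 2.
  by apply: (abs_continuous_on_seq acF); lra.
(* The endpoints join [Z] since nothing is assumed about derivatives at [x] and [y]. *)
pose Z := ~` [set t | x < t < y -> is_derive t 1 F (dF t) /\ `|dF t| <= p t]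
  `|` [set x] `|` [set y].
have negZ : mu.-negligible Z.
  have neg1 r : mu.-negligible [set r].
    by exists [set r]; split => //; exact: lebesgue_measure_set1.
  by apply: negligibleU; [apply: negligibleU|].
have [U [oU ZU muU]] := lebesgue_negligible_open_cover d0 negZ.
have local t : x <= t <= y -> U t \/ exists2 r, 0 < r & forall u v, u <= t <= v ->
    v - u < r -> `|F v - F u| <= P v - P u + eta * (v - u).
  move=> /andP[xt ty]; have [Zt|nZt] := pselect (Z t); [left; exact: ZU | right].
  have xty : x < t < y.
    by rewrite !lt_neqAle xt ty !andbT; apply/andP; split; apply/eqP => E;
      apply: nZt; rewrite /Z; [left; right|right]; rewrite /= E.
  have /contrapT/(_ xty) [dervF dFp] : ~ ~ (x < t < y ->
      is_derive t 1 F (dF t) /\ `|dF t| <= p t) by move=> H; apply: nZt; left; left.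
  exact: is_derive_increment_le dervF (dervP t xty) dFp eta0.
have [s [s_in s_nov Hy]] := increment_le_up_to_cover xy eta0 oU Pmon local.
have s_len : \sum_(q <- s) (q.2 - q.1) < d.
  rewrite -lte_fin -lebesgue_measure_big_itv_oc; last 2 first.
  - by move=> q /s_in[/andP[]].
  - exact: s_nov.
  apply: le_lt_trans muU; apply: le_measure; rewrite ?inE //.
    by apply: bigsetU_measurable => q _; exact: measurable_itv.
    exact: measurable_realfun.open_measurable.
  rewrite -bigcup_seq => w [q /= qs]; rewrite in_itv /= => /andP[q1w wq2].
  by have [_ _] := s_in q qs; apply; rewrite /= ltW.
have s_in' q : q \in s -> x <= q.1 <= q.2 /\ q.2 <= y by move=> /s_in[].
have := acd s s_in' s_nov s_len; lra.
Qed.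

End increments.

Section bipow.
Variable R : realType.
Local Notation mu := (@lebesgue_measure R).

Lemma powR_ratio_cvg_right (c d q : R) : 0 < d -> 0 < q ->
  powR ((t - c) / d) q @[t --> c^'+] --> 0.
Proof.
move=> d0 q0; apply/cvgrPdist_lt => e e0.
move/cvgrPdist_lt : (powR_cvg0 q0) => /(_ e e0).
rewrite !near_withinE => /nbhs_ballP[r /= r0 Hr].
apply/nbhs_ballP; exists (r * d) => /=; first exact: mulr_gt0.
move=> t; rewrite /ball /= => tc ct; apply: Hr; last by apply: divr_gt0; lra.
rewrite /ball /= sub0r normrN gtr0_norm ?ltr_pdivrMr //; last by apply: divr_gt0; lra.
by move: tc; rewrite ltr_norml; lra.
Qed.

Lemma powR_ratio_cvg_left (c d q : R) : d < 0 -> 0 < q ->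
  powR ((t - c) / d) q @[t --> c^'-] --> 0.
Proof.
move=> d0 q0; apply/cvg_at_leftNP.
have -> : (fun t => powR ((t - c) / d) q) \o -%R = (fun t => powR ((t - - c) / - d) q).
  by apply/funext => t /=; rewrite invrN mulrN -mulNr opprD opprK.
by apply: powR_ratio_cvg_right; lra.
Qed.

Lemma is_derive_powR_ratio (c d q t : R) : 0 < (t - c) / d ->
  is_derive t 1 (fun u => powR ((u - c) / d) q) (q * powR ((t - c) / d) (q - 1) / d).
Proof.
move=> h0.
have Haff : is_derive t 1 (fun u => (u - c) / d) d^-1.
  have H := is_deriveM (@is_derive_shift R t 1 (-c)) (is_derive_cst d^-1 t 1).
  by apply: (is_derive_eq H); rewrite /= scaler0 add0r /GRing.scale /= mulr1.
have := @is_derive1_comp _ (fun x => powR x q) (fun u => (u - c) / d) t _ _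
  (is_derive1_powR q h0) Haff.
by move=> H; apply: (is_derive_eq H).
Qed.

Lemma powR_ratio_cvg (c d q t : R) : 0 < (t - c) / d ->
  powR ((u - c) / d) q @[u --> t] --> powR ((t - c) / d) q.
Proof.
by move=> /(is_derive_powR_ratio q) [] /derivable1_diffP /differentiable_continuous.
Qed.

(* [bipow lo hi k1 k2 q t = k1 ((t - lo)/(hi - lo))^q + k2 ((hi - t)/(hi - lo))^q]: the second
   ratio is written [(t - hi)/(lo - hi)] so that both terms have the shape [((t - c)/d)^q].
   Since [powR x q = 1] for [x < 0], [bipow] is differentiable only on ]lo, hi[. *)
Definition bipow (lo hi k1 k2 q t : R) :=
  k1 * powR ((t - lo) / (hi - lo)) q + k2 * powR ((t - hi) / (lo - hi)) q.

Lemma bipow_lo (lo hi k1 k2 q : R) : lo < hi -> 0 < q -> bipow lo hi k1 k2 q lo = k2.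
Proof.
move=> lohi q0; rewrite /bipow subrr mul0r powR0 ?gt_eqF // divff ?lt_eqF ?subr_lt0 //.
by rewrite powR1 mulr0 mulr1 add0r.
Qed.

Lemma bipow_hi (lo hi k1 k2 q : R) : lo < hi -> 0 < q -> bipow lo hi k1 k2 q hi = k1.
Proof.
move=> lohi q0; rewrite /bipow subrr mul0r powR0 ?gt_eqF // divff ?gt_eqF ?subr_gt0 //.
by rewrite powR1 mulr0 mulr1 addr0.
Qed.

Lemma is_derive_bipow (lo hi k1 k2 q t : R) : lo < t < hi ->
  is_derive t 1 (bipow lo hi k1 k2 q)
    (bipow lo hi (q * k1 / (hi - lo)) (q * k2 / (lo - hi)) (q - 1) t).
Proof.
move=> /andP[lt th].
have h1 : 0 < (t - lo) / (hi - lo) by apply: divr_gt0; lra.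
have h2 : 0 < (t - hi) / (lo - hi).
  by rewrite -mulrNN -invrN !opprB; apply: divr_gt0; lra.
have H := is_deriveD (is_deriveZ k1 (is_derive_powR_ratio q h1))
                     (is_deriveZ k2 (is_derive_powR_ratio q h2)).
by apply: (is_derive_eq H); rewrite /bipow /GRing.scale /=; field; solve_neq0.
Qed.

Lemma derivable_bipow (lo hi k1 k2 q t : R) : lo < t < hi ->
  derivable (bipow lo hi k1 k2 q) t 1.
Proof. by move=> H; case: (is_derive_bipow k1 k2 q H). Qed.

Lemma bipow_LRcontinuous (lo hi k1 k2 q : R) : lo < hi -> 0 < q ->
  derivable_oo_LRcontinuous (bipow lo hi k1 k2 q) lo hi.
Proof.
move=> lohi q0; have ratio1 (u v : R) : u < v -> 0 < (v - u) / (v - u).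
  by move=> uv; rewrite divff ?gt_eqF ?subr_gt0.
split.
- by move=> t; rewrite in_itv /=; exact: derivable_bipow.
- have -> : bipow lo hi k1 k2 q lo = k1 * 0 + k2 * powR ((lo - hi) / (lo - hi)) q.
    by rewrite /bipow subrr mul0r powR0 ?gt_eqF.
  apply: cvgD; apply: cvgM; try exact: cvg_cst.
  + by apply: powR_ratio_cvg_right; rewrite ?subr_gt0.
  + apply: cvg_at_right_filter; apply: powR_ratio_cvg.
    by rewrite -opprB -mulrNN -invrN !opprK; apply: ratio1.
- have -> : bipow lo hi k1 k2 q hi = k1 * powR ((hi - lo) / (hi - lo)) q + k2 * 0.
    by rewrite /bipow subrr mul0r powR0 ?gt_eqF.
  apply: cvgD; apply: cvgM; try exact: cvg_cst.
  + by apply: cvg_at_left_filter; apply: powR_ratio_cvg; apply: ratio1.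
  + by apply: powR_ratio_cvg_left; rewrite ?subr_lt0.
Qed.

Lemma bipow_le (lo hi k1 k2 q u v : R) : lo < hi -> 0 <= k1 -> k2 <= 0 -> 0 <= q ->
  lo <= u -> u <= v -> v <= hi -> bipow lo hi k1 k2 q u <= bipow lo hi k1 k2 q v.
Proof.
move=> lohi k10 k20 q0 lu uv vh.
have powR_le x y : 0 <= x -> x <= y -> powR x q <= powR y q.
  by move=> x0 xy; apply: (ge0_ler_powR q0); rewrite ?nnegrE ?(le_trans x0).
have h1 : powR ((u - lo) / (hi - lo)) q <= powR ((v - lo) / (hi - lo)) q.
  by apply: powR_le; [apply: divr_ge0 | rewrite ler_pM2r ?invr_gt0]; lra.
have h2 : powR ((v - hi) / (lo - hi)) q <= powR ((u - hi) / (lo - hi)) q.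
  have flip w : (w - hi) / (lo - hi) = (hi - w) / (hi - lo).
    by rewrite -mulrNN -invrN !opprB.
  by rewrite !flip; apply: powR_le; [apply: divr_ge0 | rewrite ler_pM2r ?invr_gt0]; lra.
rewrite /bipow; nra.
Qed.

Lemma Rintegral_bipow (lo hi k1 k2 q : R) : lo < hi -> 0 < q ->
  \int[mu]_(t in `[lo, hi]) bipow lo hi k1 k2 q t = (hi - lo) / (q + 1) * (k1 + k2).
Proof.
move=> lohi q0; have q1 : 0 < q + 1 by lra.
pose G := bipow lo hi ((hi - lo) / (q + 1) * k1) ((lo - hi) / (q + 1) * k2) (q + 1).
have G' : {in `]lo, hi[, G^`()%classic =1 bipow lo hi k1 k2 q}.
  move=> t; rewrite in_itv /= => /is_derive_bipow H.
  by rewrite derive1E derive_val addrK; congr bipow; field; solve_neq0.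
have := continuous_FTC2 lohi (derivable_oo_LRcontinuous_within (bipow_LRcontinuous k1 k2 lohi q0))
  (bipow_LRcontinuous _ _ lohi q1) G'.
rewrite /Rintegral => ->; rewrite /G bipow_hi ?bipow_lo //=; field; solve_neq0.
Qed.

Lemma integrable_bipow (lo hi k1 k2 q : R) : lo < hi -> 0 < q ->
  mu.-integrable `[lo, hi] (EFin \o bipow lo hi k1 k2 q).
Proof.
move=> lohi q0; apply: continuous_compact_integrable; first exact: segment_compact.
exact/derivable_oo_LRcontinuous_within/bipow_LRcontinuous.
Qed.

End bipow.

Section interval_integrals.
Variable R : realType.
Local Notation mu := (@lebesgue_measure R).

Lemma integrable_itv_cst (p q k : R) : mu.-integrable `[p, q] (EFin \o fun=> k).
Proof.
apply: continuous_compact_integrable; first exact: segment_compact.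
by apply: continuous_subspaceT => x; exact: cst_continuous.
Qed.

Lemma integrable_itvS (a b p q : R) (F : R -> R) : a <= p -> q <= b ->
  mu.-integrable `[a, b] (EFin \o F) -> mu.-integrable `[p, q] (EFin \o F).
Proof.
move=> ap qb; apply: integrableS => // t; rewrite /= !in_itv /=.
by move=> /andP[? ?]; apply/andP; split; lra.
Qed.

Lemma integrable_mul_bounded (D : set R) (F h : R -> R) : measurable D ->
  mu.-integrable D (EFin \o F) -> mu.-integrable D (EFin \o h) ->
  (forall t, D t -> `|h t| <= 1) -> mu.-integrable D (EFin \o (fun t => F t * h t)).
Proof.
move=> mD iF ih h1.
have /measurable_realfun.measurable_EFinP mh := measurable_int _ ih.
have bh : [bounded h x | x in D].
  by exists 1; split => // M M1 t /h1 /le_trans; apply; exact: ltW.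
exact: integrableMl iF mh bh.
Qed.

Lemma Rintegral_itv_cst (p q k : R) : p <= q -> \int[mu]_(t in `[p, q]) k = k * (q - p).
Proof.
move=> pq; rewrite Rintegral_cst // [X in fine X](lebesgue_measure_itv `[p, q]) /= lte_fin.
by case: ltgtP pq => // -> _; rewrite subrr.
Qed.

Lemma Rintegral_itv_split (a c b : R) (F : R -> R) : a <= c -> c <= b ->
  mu.-integrable `[a, b] (EFin \o F) ->
  \int[mu]_(t in `[a, b]) F t = \int[mu]_(t in `[a, c]) F t + \int[mu]_(t in `[c, b]) F t.
Proof.
move=> ac cb iF; have iFcb : mu.-integrable `]c, b] (EFin \o F).
  by apply: integrableS iF => // t; rewrite /= !in_itv /= => /andP[? ?]; apply/andP; split; lra.
rewrite -(Rintegral_itv_obnd_cbnd iFcb) -(Rintegral_itvB iF) ?bnd_simp //; ring.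
Qed.

Lemma le_Rintegral_mul_bounded (D : set R) (u h v : R -> R) : measurable D ->
  mu.-integrable D (EFin \o u) -> mu.-integrable D (EFin \o h) ->
  mu.-integrable D (EFin \o v) ->
  (forall t, D t -> `|u t| <= v t) -> (forall t, D t -> `|h t| <= 1) ->
  `|\int[mu]_(t in D) (u t * h t)| <= \int[mu]_(t in D) v t.
Proof.
move=> mD iu ih iv uv h1; have iuh := integrable_mul_bounded mD iu ih h1.
apply: le_trans (le_normr_Rintegral _ iuh) _ => //.
apply: le_Rintegral => //; first exact: integrable_norm.
move=> t Dt; rewrite normrM; apply: le_trans (uv t Dt).
by rewrite -[leRHS]mulr1 ler_wpM2l ?h1.
Qed.

Lemma Rintegral_itv_unit_bounds (a b : R) (g : R -> R) : a <= b ->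
  mu.-integrable `[a, b] (EFin \o g) -> (forall t, a <= t <= b -> 0 <= g t <= 1) ->
  0 <= \int[mu]_(t in `[a, b]) g t <= b - a.
Proof.
move=> ab ig g01; apply/andP; split.
  by apply: Rintegral_ge0 => t; rewrite /= in_itv => /g01 /andP[].
rewrite -[leRHS]mul1r -Rintegral_itv_cst //.
apply: le_Rintegral => //; first exact: integrable_itv_cst.
by move=> t; rewrite /= in_itv => /g01 /andP[].
Qed.

Lemma integrable_itvZl (p q k : R) (w : R -> R) : mu.-integrable `[p, q] (EFin \o w) ->
  mu.-integrable `[p, q] (EFin \o (fun t => k * w t)).
Proof. by move=> iw; have := integrableZl _ k iw; apply. Qed.

Lemma integrable_itvB (p q : R) (F G : R -> R) :
  mu.-integrable `[p, q] (EFin \o F) -> mu.-integrable `[p, q] (EFin \o G) ->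
  mu.-integrable `[p, q] (EFin \o (fun t => F t - G t)).
Proof. by move=> iF iG; have := integrableB _ iF iG; apply. Qed.

Lemma integrable_itv_shiftMl (p q k : R) (F w : R -> R) :
  mu.-integrable `[p, q] (EFin \o w) ->
  mu.-integrable `[p, q] (EFin \o (fun t => F t * w t)) ->
  mu.-integrable `[p, q] (EFin \o (fun t => (F t - k) * w t)).
Proof.
move=> iw iFw; apply: eq_integrable (integrable_itvB iFw (integrable_itvZl k iw)) => //.
by move=> t _ /=; rewrite mulrBl.
Qed.

Lemma Rintegral_shiftMl (p q k : R) (F w : R -> R) :
  mu.-integrable `[p, q] (EFin \o w) ->
  mu.-integrable `[p, q] (EFin \o (fun t => F t * w t)) ->
  \int[mu]_(t in `[p, q]) ((F t - k) * w t)
    = \int[mu]_(t in `[p, q]) (F t * w t) - k * \int[mu]_(t in `[p, q]) w t.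
Proof.
move=> iw iFw; under eq_Rintegral => t _ do rewrite mulrBl.
by rewrite RintegralB ?RintegralZl //; exact: integrable_itvZl.
Qed.

Lemma Rintegral_shiftM1Bl (p q k : R) (F w : R -> R) : p <= q ->
  mu.-integrable `[p, q] (EFin \o F) -> mu.-integrable `[p, q] (EFin \o w) ->
  mu.-integrable `[p, q] (EFin \o (fun t => F t * w t)) ->
  \int[mu]_(t in `[p, q]) ((F t - k) * (1 - w t))
    = \int[mu]_(t in `[p, q]) F t - k * (q - p)
      - (\int[mu]_(t in `[p, q]) (F t * w t) - k * \int[mu]_(t in `[p, q]) w t).
Proof.
move=> pq iF iw iFw; have iFk := integrable_itvB iF (integrable_itv_cst p q k).
under eq_Rintegral => t _ do rewrite mulrBr mulr1.
rewrite RintegralB ?Rintegral_shiftMl ?RintegralB ?Rintegral_itv_cst //.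
- exact: integrable_itv_cst.
- exact: integrable_itv_shiftMl.
Qed.

Section weighted_split.
Variables (a c b k : R) (F w : R -> R).
Hypotheses (ac : a <= c) (cb : c <= b).
Hypotheses (iF : mu.-integrable `[a, b] (EFin \o F))
  (iw : mu.-integrable `[a, b] (EFin \o w))
  (iFw : mu.-integrable `[a, b] (EFin \o (fun t => F t * w t))).

Lemma Rintegral_weighted_split_left :
  \int[mu]_(t in `[a, c]) ((F t - k) * (1 - w t)) - \int[mu]_(t in `[c, b]) ((F t - k) * w t)
  = \int[mu]_(t in `[a, c]) F t - \int[mu]_(t in `[a, b]) (F t * w t)
    - k * ((c - a) - \int[mu]_(t in `[a, b]) w t).
Proof.
rewrite Rintegral_shiftM1Bl ?Rintegral_shiftMl //.
  by rewrite (Rintegral_itv_split ac cb iFw) (Rintegral_itv_split ac cb iw); ring.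
all: by apply: (integrable_itvS (a := a) (b := b)); rewrite ?lexx.
Qed.

Lemma Rintegral_weighted_split_right :
  \int[mu]_(t in `[a, c]) ((F t - k) * w t) - \int[mu]_(t in `[c, b]) ((F t - k) * (1 - w t))
  = \int[mu]_(t in `[a, b]) (F t * w t) - \int[mu]_(t in `[c, b]) F t
    - k * (\int[mu]_(t in `[a, b]) w t - (b - c)).
Proof.
rewrite Rintegral_shiftM1Bl ?Rintegral_shiftMl //.
  by rewrite (Rintegral_itv_split ac cb iFw) (Rintegral_itv_split ac cb iw); ring.
all: by apply: (integrable_itvS (a := a) (b := b)); rewrite ?lexx.
Qed.

End weighted_split.

End interval_integrals.

Section s_convex.
Variable R : realType.
Local Notation mu := (@lebesgue_measure R).
Variables (s a b : R) (f df : R -> R).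
Hypotheses (s_gt0 : 0 < s) (acf : abs_continuous_on a b f)
  (df_ae : {ae mu, forall t, a <= t <= b -> is_derive t 1 f (df t)})
  (cvx : s_convex_on s `[a, b] (fun t => `|df t|)).

Lemma s_convex_abs_df_le (lo hi t : R) : a <= lo -> hi <= b -> lo < t < hi ->
  `|df t| <= bipow lo hi `|df hi| `|df lo| s t.
Proof.
move=> alo hib /andP[lot thi].
have al : 0 <= (t - lo) / (hi - lo) by apply: divr_ge0; lra.
have be : 0 <= (t - hi) / (lo - hi) by rewrite -mulrNN -invrN !opprB; apply: divr_ge0; lra.
have tE : (t - lo) / (hi - lo) * hi + (t - hi) / (lo - hi) * lo = t.
  by field; solve_neq0.
have := cvx (x := hi) (y := lo) _ _ al be; rewrite tE /bipow (mulrC `|df hi|) (mulrC `|df lo|).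
apply; rewrite /= ?in_itv /=; first [by apply/andP; split; lra | by field; solve_neq0].
Qed.

(* A primitive on ]lo, hi[ of the bound of [s_convex_abs_df_le]. *)
Local Notation primitive lo hi :=
  (bipow lo hi ((hi - lo) / (s + 1) * `|df hi|) ((lo - hi) / (s + 1) * `|df lo|) (s + 1)).

Lemma increment_le_primitive (lo hi x y : R) : a <= lo -> lo < hi -> hi <= b ->
  lo <= x -> x <= y -> y <= hi ->
  `|f y - f x| <= primitive lo hi y - primitive lo hi x.
Proof.
move=> alo lohi hib lox xy yhi.
have s1 : 0 < s + 1 by apply: addr_gt0.
apply: (abs_continuous_increment_le (dF := df) (p := bipow lo hi `|df hi| `|df lo| s)) => //.
- by apply: abs_continuous_onS acf; lra.
- move=> u v xu uv vy; apply: bipow_le; rewrite ?normr_ge0; try lra.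
  + by rewrite mulr_ge0 // divr_ge0 //; lra.
  + by rewrite mulr_le0_ge0 // mulr_le0_ge0 ?invr_ge0 //; lra.
- move=> t xty; have lty : lo < t < hi by move: xty => /andP[? ?]; apply/andP; split; lra.
  apply: (is_derive_eq (is_derive_bipow _ _ _ lty)).
  by rewrite addrK; congr bipow; field; solve_neq0.
- apply: negligibleS df_ae => t /= nP dft; apply: nP => xty.
  have lty : lo < t < hi by move: xty => /andP[? ?]; apply/andP; split; lra.
  by split; [apply: dft | exact: s_convex_abs_df_le lty]; lra.
Qed.

Lemma Rintegral_deviation_hi_le (lo hi : R) (h : R -> R) : a <= lo -> lo <= hi -> hi <= b ->
  mu.-integrable `[lo, hi] (EFin \o f) -> mu.-integrable `[lo, hi] (EFin \o h) ->
  (forall t, lo <= t <= hi -> `|h t| <= 1) ->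
  `|\int[mu]_(t in `[lo, hi]) ((f t - f hi) * h t)|
    <= (hi - lo) ^+ 2 * (`|df lo| / ((s + 1) * (s + 2)) + `|df hi| / (s + 2)).
Proof.
move=> alo; rewrite le_eqVlt => /predU1P[<- _ _ _ _|lohi hib iF ih h1].
  by rewrite set_itv1 Rintegral_set1 normr0 subrr expr0n /= mul0r.
have s1 : 0 < s + 1 by apply: addr_gt0.
have iP := integrable_bipow ((hi - lo) / (s + 1) * `|df hi|) ((lo - hi) / (s + 1) * `|df lo|) lohi s1.
have gap : \int[mu]_(t in `[lo, hi]) (primitive lo hi hi - primitive lo hi t)
    = (hi - lo) ^+ 2 * (`|df lo| / ((s + 1) * (s + 2)) + `|df hi| / (s + 2)).
  rewrite RintegralB ?Rintegral_itv_cst ?Rintegral_bipow ?bipow_hi ?(ltW lohi) //.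
    by field; solve_neq0.
  exact: integrable_itv_cst.
rewrite -gap; apply: le_Rintegral_mul_bounded => //.
- exact: integrable_itvB iF (integrable_itv_cst _ _ _).
- exact: integrable_itvB (integrable_itv_cst _ _ _) iP.
- move=> t; rewrite /= in_itv /= => /andP[lot thi]; rewrite distrC.
  exact: increment_le_primitive.
Qed.

Lemma Rintegral_deviation_lo_le (lo hi : R) (h : R -> R) : a <= lo -> lo <= hi -> hi <= b ->
  mu.-integrable `[lo, hi] (EFin \o f) -> mu.-integrable `[lo, hi] (EFin \o h) ->
  (forall t, lo <= t <= hi -> `|h t| <= 1) ->
  `|\int[mu]_(t in `[lo, hi]) ((f t - f lo) * h t)|
    <= (hi - lo) ^+ 2 * (`|df hi| / ((s + 1) * (s + 2)) + `|df lo| / (s + 2)).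
Proof.
move=> alo; rewrite le_eqVlt => /predU1P[<- _ _ _ _|lohi hib iF ih h1].
  by rewrite set_itv1 Rintegral_set1 normr0 subrr expr0n /= mul0r.
have s1 : 0 < s + 1 by apply: addr_gt0.
have iP := integrable_bipow ((hi - lo) / (s + 1) * `|df hi|) ((lo - hi) / (s + 1) * `|df lo|) lohi s1.
have gap : \int[mu]_(t in `[lo, hi]) (primitive lo hi t - primitive lo hi lo)
    = (hi - lo) ^+ 2 * (`|df hi| / ((s + 1) * (s + 2)) + `|df lo| / (s + 2)).
  rewrite RintegralB ?Rintegral_itv_cst ?Rintegral_bipow ?bipow_lo ?(ltW lohi) //.
    by field; solve_neq0.
  exact: integrable_itv_cst.
rewrite -gap; apply: le_Rintegral_mul_bounded => //.
- exact: integrable_itvB iF (integrable_itv_cst _ _ _).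
- exact: integrable_itvB iP (integrable_itv_cst _ _ _).
- move=> t; rewrite /= in_itv /= => /andP[lot thi].
  exact: increment_le_primitive.
Qed.

Lemma Rintegral_two_sided_deviation_le (c : R) (w1 w2 : R -> R) : a <= c -> c <= b ->
  mu.-integrable `[a, b] (EFin \o f) ->
  mu.-integrable `[a, b] (EFin \o w1) -> mu.-integrable `[a, b] (EFin \o w2) ->
  (forall t, a <= t <= b -> `|w1 t| <= 1) -> (forall t, a <= t <= b -> `|w2 t| <= 1) ->
  `|\int[mu]_(t in `[a, c]) ((f t - f c) * w1 t) - \int[mu]_(t in `[c, b]) ((f t - f c) * w2 t)|
    <= ((s + 1) * (s + 2))^-1 * ((c - a) ^+ 2 * `|df a| + (b - c) ^+ 2 * `|df b|)
       + (s + 2)^-1 * ((c - a) ^+ 2 + (b - c) ^+ 2) * `|df c|.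
Proof.
move=> ac cb iF iw1 iw2 w1_le1 w2_le1.
have w1b t : a <= t <= c -> `|w1 t| <= 1.
  by move=> /andP[? ?]; apply: w1_le1; apply/andP; split; lra.
have w2b t : c <= t <= b -> `|w2 t| <= 1.
  by move=> /andP[? ?]; apply: w2_le1; apply/andP; split; lra.
have left := Rintegral_deviation_hi_le (lexx a) ac cb
  (integrable_itvS (lexx a) cb iF) (integrable_itvS (lexx a) cb iw1) w1b.
have right := Rintegral_deviation_lo_le ac cb (lexx b)
  (integrable_itvS ac (lexx b) iF) (integrable_itvS ac (lexx b) iw2) w2b.
have -> : ((s + 1) * (s + 2))^-1 * ((c - a) ^+ 2 * `|df a| + (b - c) ^+ 2 * `|df b|)
       + (s + 2)^-1 * ((c - a) ^+ 2 + (b - c) ^+ 2) * `|df c|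
    = (c - a) ^+ 2 * (`|df a| / ((s + 1) * (s + 2)) + `|df c| / (s + 2))
      + (b - c) ^+ 2 * (`|df b| / ((s + 1) * (s + 2)) + `|df c| / (s + 2)).
  have s1 : 0 < s + 1 by apply: addr_gt0.
  by field; solve_neq0.
exact: le_trans (ler_normB _ _) (lerD left right).
Qed.
End s_convex.

Theorem theorem2p2 (R : realType) (s a b : R) (f g df : R -> R) :
  0 < s -> s <= 1 ->
  0 <= a -> a < b ->
  (@lebesgue_measure R).-integrable `[a, b] (EFin \o f) ->
  (@lebesgue_measure R).-integrable `[a, b] (EFin \o g) ->
  (forall t, a <= t <= b -> 0 <= g t <= 1) ->
  abs_continuous_on a b f ->
  (* df is a derivative of f: f is differentiable with derivative df x
     at almost every x of [a,b] *)
  {ae (@lebesgue_measure R),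
     forall x, a <= x <= b -> is_derive x 1 f (df x)} ->
  (@lebesgue_measure R).-integrable `[a, b]
     (EFin \o (fun t => g t * df t)) ->
  s_convex_on s `[a, b] (fun t => `|df t|) ->
  let lam := \int[@lebesgue_measure R]_(t in `[a, b]) g t in
  `| \int[@lebesgue_measure R]_(t in `[a, a + lam]) f t
     - \int[@lebesgue_measure R]_(t in `[a, b]) (f t * g t) |
    <= ((s + 1) * (s + 2))^-1 * (lam ^+ 2 * `|df a| + (b - a - lam) ^+ 2 * `|df b|)
       + (s + 2)^-1 * (lam ^+ 2 + (b - a - lam) ^+ 2) * `|df (a + lam)|
  /\
  `| \int[@lebesgue_measure R]_(t in `[a, b]) (f t * g t)
     - \int[@lebesgue_measure R]_(t in `[b - lam, b]) f t |
    <= ((s + 1) * (s + 2))^-1 * (lam ^+ 2 * `|df b| + (b - a - lam) ^+ 2 * `|df a|)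
       + (s + 2)^-1 * (lam ^+ 2 + (b - a - lam) ^+ 2) * `|df (b - lam)|.
Proof.
move=> s_gt0 _ _ ab iF iG g01 acf df_ae _ cvx lam.
have g_le1 t : a <= t <= b -> `|g t| <= 1.
  by move=> /g01 /andP[? ?]; rewrite ger0_norm.
have g1B_le1 t : a <= t <= b -> `|1 - g t| <= 1.
  by move=> /g01 /andP[? ?]; rewrite ger0_norm; lra.
have i1g := integrable_itvB (integrable_itv_cst a b 1) iG.
have ifg := integrable_mul_bounded (measurable_itv _) iF iG g_le1.
have /andP[lam_ge0 lam_le] : 0 <= lam <= b - a := Rintegral_itv_unit_bounds (ltW ab) iG g01.
have bound := Rintegral_two_sided_deviation_le s_gt0 acf df_ae cvx.
split.
- set c := a + lam; have [ac cb] : a <= c /\ c <= b by rewrite /c; split; lra.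
  have := bound _ _ _ ac cb iF i1g iG g1B_le1 g_le1.
  rewrite Rintegral_weighted_split_left // -/lam.
  have -> : c - a - lam = 0 by rewrite /c; ring.
  have -> : c - a = lam by rewrite /c; ring.
  have -> : b - c = b - a - lam by rewrite /c; ring.
  by rewrite mulr0 subr0.
- set c := b - lam; have [ac cb] : a <= c /\ c <= b by rewrite /c; split; lra.
  have := bound _ _ _ ac cb iF iG i1g g_le1 g1B_le1.
  rewrite Rintegral_weighted_split_right // -/lam.
  have -> : lam - (b - c) = 0 by rewrite /c; ring.
  have -> : c - a = b - a - lam by rewrite /c; ring.
  have -> : b - c = lam by rewrite /c; ring.
  by rewrite mulr0 subr0 [_ ^+ 2 * _ + _]addrC [_ ^+ 2 + _]addrC.
Qed.
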